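(* The condition $\big[\sigma_{23}\sigma_{12}\big(\Pi(\omega)\otimes_A \nabla(\nu)\big)\big] = \big[\nabla(\nu)\otimes_A \Pi(\omega)\big]$ in $\Omega^1_B\otimes_Bq_!(\Omega^1_A)\otimes_Bq_!(\Omega^1_A)$ holds for all $\omega\in\Omega^1_A$. The induced spinorial structure on $\mathbb{S}^3_\theta$ reads explicitly as \[ \mathcal{E}_{B} = \frac{\mathcal{E}}{f\, \mathcal{E}}\quad,\quad \gamma_{B}\big(\mathrm{d} z^{i} \otimes_{B} e_{\alpha}\big) = - \Big(\sum_{k,l=1}^4 g_{kl}\, z^{k}\, \gamma_{\theta}^{l}\, \gamma_{\theta}^{i} + z^{i} \Big) \,e_{\alpha}\quad,\quad \nabla^{\mathrm{sp}}_{B} (e_{\alpha}) = \frac{1}{2}\, \sum_{i,j,k,l=1}^4 g_{ij}\, g_{kl}\, z^{k}\, \mathrm{d} z^{i} \otimes_{B} \gamma_{\theta}^{j}\, \gamma_{\theta}^{l}\, e_{\alpha}\quad. \]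
   Context: Setting of $\mathbb{R}^4_\theta$: $A = \mathbb{C}[z^{1},\dots,z^{4}]/(z^{i} z^{j} - R^{ji} z^{j} z^{i})$ with $R$ the matrix with rows $(1,e^{-i\theta},1,e^{i\theta})$, $(e^{i\theta},1,e^{-i\theta},1)$, $(1,e^{i\theta},1,e^{-i\theta})$, $(e^{-i\theta},1,e^{i\theta},1)$; $\Omega^1_A$ free left module on $\mathrm{d} z^i$ with $\mathrm{d} z^i z^j = R^{ji}z^j\mathrm{d} z^i$; metric $g=\sum g_{ij}\mathrm{d} z^i\otimes_A \mathrm{d} z^j$, $(g_{ij})=\tfrac12$ times the matrix with rows $(0,0,1,0),(0,0,0,1),(1,0,0,0),(0,1,0,0)$, $g^{-1}(\mathrm{d} z^i\otimes_A\mathrm{d} z^j)=g^{ij}$ with $(g^{ij})$ twice that matrix; $\nabla(\mathrm{d} z^i)=0$, $\sigma(\mathrm{d} z^i\otimes_A\mathrm{d} z^j)=R^{ji}\mathrm{d} z^j\otimes_A\mathrm{d} z^i$; spinors $\mathcal{E}=A^4$ with basis $e_\alpha$, $\nabla^{\mathrm{sp}}(e_\alpha)=0$, $\gamma(\mathrm{d} z^i\otimes_A e_\alpha)=\gamma^i_\theta e_\alpha$ with the $\theta$-deformed gamma matrices $\gamma^i_\theta$ (satisfying $\gamma^i_\theta\gamma^j_\theta + R^{ji}\gamma^j_\theta\gamma^i_\theta = -2g^{ij}I_4$), and $\gamma_{[2]}=\gamma\circ(\mathrm{id}\otimes_A\gamma)$. The sphere algebra is $B=A/(f)$ with quotient map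 $q$, $f = \tfrac{1}{2}(\sum_{i,j} g_{ij} z^{i} z^{j} - 1)$ central; $\nu := \mathrm{d} f = \sum_{i,j} g_{ij} z^{i}\mathrm{d} z^{j}$ is central with $g^{-1}(\nu\otimes_A\nu)=1$. $q_!(\Omega^1_A)=\Omega^1_A/(f\Omega^1_A\cup\Omega^1_A f)$, $\Omega^1_B = q_!(\Omega^1_A)/B[\mathrm{d} f]B$, $\Pi(\omega) = \omega - g^{-1}(\omega\otimes_A\nu)\,\nu$ (so $\Pi(\mathrm{d} z^i) = \mathrm{d} z^i - z^i\nu$), $\sigma_{12}=\sigma\otimes_A\mathrm{id}$, $\sigma_{23}=\mathrm{id}\otimes_A\sigma$. The induced spinorial structure is defined by $\mathcal{E}_B = q_!(\mathcal{E})\cong\mathcal{E}/f\mathcal{E}$, $\gamma_B([\omega]\otimes_B[s]) = [\gamma_{[2]}(\Pi(\omega)\otimes_A\nu\otimes_A s)]$ and $\nabla^{\mathrm{sp}}_B([s]) = [\nabla^{\mathrm{sp}}(s) + \tfrac12(\mathrm{id}\otimes_A\gamma_{[2]})(\nabla(\nu)\otimes_A\nu\otimes_A s)]$; square brackets for equivalence classes are suppressed in the formulas of the claim. *)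

From mathcomp Require Import all_boot all_algebra.
From mathcomp Require Import reals complex.
From mathcomp Require Import mpoly.

Set Implicit Arguments.
Unset Strict Implicit.
Unset Printing Implicit Defensive.

Import GRing.Theory Num.Theory.
Local Open Scope ring_scope.

Section Theta.
Variable R : realType.
Local Notation C := (R[i]).
(* q stands for e^{i theta}; hence e^{-i theta} = q^-1 *)
Variable q : C.

(* The algebra A = C<z1..z4>/(z^i z^j - R^{ji} z^j z^i), represented on its
   PBW basis of ordered monomials z^m = z1^m1 z2^m2 z3^m3 z4^m4
   (the underlying C-vector space of {mpoly C[4]}), with twisted product. *)
Definition A := {mpoly C[4]}.

Definition Rm (a b : 'I_4) : C :=
  nth 0 (nth [::] [:: [:: 1; q^-1; 1; q];
                      [:: q; 1; q^-1; 1];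
                      [:: 1; q; 1; q^-1];
                      [:: q^-1; 1; q; 1]] a) b.

Definition Pm (a b : 'I_4) : C :=
  nth 0 (nth [::] [:: [:: 0; 0; 1; 0];
                      [:: 0; 0; 0; 1];
                      [:: 1; 0; 0; 0];
                      [:: 0; 1; 0; 0]] a) b.
Definition gl (a b : 'I_4) : C := 2^-1 * Pm a b.
Definition ginv (a b : 'I_4) : C := 2 * Pm a b.

(* z^m z^n = tw m n z^(m+n), obtained by moving every z^b of z^n to the left
   of every z^a of z^m with a > b, using z^a z^b = R^{ba} z^b z^a. *)
Definition tw (m n : 'X_{1..4}) : C :=
  \prod_(a < 4) \prod_(b < 4 | (b < a)%N) Rm b a ^+ (m a * n b).

Definition tmul (p r : A) : A :=
  \sum_(m <- msupp p) \sum_(n <- msupp r) (p@_m * r@_n * tw m n) *: 'X_[(m + n)%MM].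

Definition z (i : 'I_4) : A := 'X_i.

(* the algebra automorphism sigma_i with  dz^i a = sigma_i(a) dz^i
   (determined by dz^i z^j = R^{ji} z^j dz^i) *)
Definition sig (i : 'I_4) (p : A) : A :=
  \sum_(m <- msupp p) (p@_m * \prod_(j < 4) Rm j i ^+ m j) *: 'X_[m].

(* Free left A-modules, written in coordinates w.r.t. their bases:
   Om1 : Omega^1_A, basis dz^i;
   Om2 : Omega^1_A (x)_A Omega^1_A, basis dz^i (x) dz^j;
   Om3 : Omega^1 (x)_A Omega^1 (x)_A Omega^1, basis dz^i (x) dz^j (x) dz^k;
   Sp  : E = A^4, basis e_alpha;
   OmSp : Omega^1 (x)_A E, basis dz^i (x) e_alpha;
   Om2Sp : Omega^1 (x) Omega^1 (x) E;  Om3Sp : Omega^1 (x) Omega^1 (x) Omega^1 (x) E. *)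
Definition Om1 := 'I_4 -> A.
Definition Om2 := 'I_4 -> 'I_4 -> A.
Definition Om3 := 'I_4 -> 'I_4 -> 'I_4 -> A.
Definition Sp := 'I_4 -> A.
Definition OmSp := 'I_4 -> 'I_4 -> A.
Definition Om2Sp := 'I_4 -> 'I_4 -> 'I_4 -> A.
Definition Om3Sp := 'I_4 -> 'I_4 -> 'I_4 -> 'I_4 -> A.

Definition dz (i : 'I_4) : Om1 := fun k => if k == i then 1 else 0.
Definition e (al : 'I_4) : Sp := fun b => if b == al then 1 else 0.

(* the exterior derivative d : A -> Omega^1_A (unique derivation with
   d z^i = dz^i), on the PBW basis *)
Definition dA (p : A) : Om1 := fun i =>
  \sum_(m <- msupp p)
     (p@_m * (m i)%:R * \prod_(j < 4 | (i < j)%N) Rm j i ^+ m j)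
       *: 'X_[mnm_sub m (mnm1 i)].

(* tensor products over A (coefficients are moved to the left using
   dz^i a = sigma_i(a) dz^i) *)
Definition tens11 (w v : Om1) : Om2 := fun i j => tmul (w i) (sig i (v j)).
Definition tens12 (w : Om1) (T : Om2) : Om3 :=
  fun i j k => tmul (w i) (sig i (T j k)).
Definition tens21 (T : Om2) (v : Om1) : Om3 :=
  fun i j k => tmul (T i j) (sig i (sig j (v k))).
Definition tensE (w : Om1) (s : Sp) : OmSp := fun i al => tmul (w i) (sig i (s al)).
Definition tens1E (w : Om1) (X : OmSp) : Om2Sp :=
  fun i j al => tmul (w i) (sig i (X j al)).
Definition tens2E (T : Om2) (X : OmSp) : Om3Sp :=
  fun i j k al => tmul (T i j) (sig i (sig j (X k al))).

Definition fA : A :=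
  2^-1 *: (\sum_(i < 4) \sum_(j < 4) gl i j *: tmul (z i) (z j) - 1).
Definition nu : Om1 := dA fA.

Definition ginvT (T : Om2) : A := \sum_(i < 4) \sum_(j < 4) ginv i j *: T i j.

(* Levi-Civita connection: nabla(dz^j) = 0 + left Leibniz rule *)
Definition nabla (w : Om1) : Om2 := fun i j => dA (w j) i.

(* braiding sigma(dz^a (x) dz^b) = R^{ba} dz^b (x) dz^a, and sigma_12, sigma_23 *)
Definition sigma12 (U : Om3) : Om3 := fun i j k => Rm i j *: U j i k.
Definition sigma23 (U : Om3) : Om3 := fun i j k => Rm j k *: U i k j.

Definition Pi (w : Om1) : Om1 := fun j => w j - tmul (ginvT (tens11 w nu)) (nu j).

Section Spin.
Variable gam : 'I_4 -> 'M[C]_4.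

(* Clifford action gamma(dz^i (x) e_al) = gamma^i e_al *)
Definition gamma (X : OmSp) : Sp :=
  fun b => \sum_(i < 4) \sum_(al < 4) gam i b al *: X i al.
(* gamma_[2] = gamma o (id (x) gamma) *)
Definition gamma2 (Y : Om2Sp) : Sp := gamma (fun i => gamma (Y i)).
Definition idgamma2 (Z : Om3Sp) : OmSp := fun i => gamma2 (Z i).
(* spin connection with nabla^sp(e_al) = 0 *)
Definition nablaSp (s : Sp) : OmSp := fun i al => dA (s al) i.

(* induced structure on representatives *)
Definition gammaB (w : Om1) (s : Sp) : Sp := gamma2 (tens1E (Pi w) (tensE nu s)).
Definition nablaB (s : Sp) : OmSp :=
  fun i al => nablaSp s i al + 2^-1 *: idgamma2 (tens2E (nabla nu) (tensE nu s)) i al.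
End Spin.

(* equality of classes:
   in E_B = E / f E *)
Definition eqEB (s s' : Sp) : Prop :=
  exists t : Sp, forall al, s al - s' al = tmul fA (t al).
(* in Omega^1_B (x)_B E_B = (Omega^1 (x)_A E) / (f (Omega^1 (x) E) + nu (x) E) *)
Definition eqOmEB (X X' : OmSp) : Prop :=
  exists (V : OmSp) (W : Sp), forall i al,
    X i al - X' i al = tmul fA (V i al) + tensE nu W i al.
(* in Omega^1_B (x)_B q_!(Omega^1_A) (x)_B q_!(Omega^1_A)
   = Omega^1 (x) Omega^1 (x) Omega^1 / (f Om3 + nu (x) Om2) *)
Definition eqOm3B (U U' : Om3) : Prop :=
  exists (V : Om3) (W : Om2), forall i j k,
    U i j k - U' i j k = tmul fA (V i j k) + tens12 nu W i j k.

End Theta.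

(* The metric pairs z^i with z^(mate i) = z^(i+2), so nu_k = z^(mate k)/2,
   nabla(nu) = sum g_ij dz^i (x) dz^j has constant coefficients, and g_ij is nonzero only
   where every braiding factor R^{ij} equals 1.  Hence the braid condition holds exactly,
   and nabla^sp_B(e_alpha) is read off directly.  For gamma_B, Pi(dz^i) = dz^i - z^i nu:
   the dz^i term is reordered by the Clifford relation, while the other term is
   z^i gamma(nu) gamma(nu) e_alpha.  Since sigma(nu (x) nu) = nu (x) nu, symmetrizing with
   the Clifford relation gives gamma(nu) gamma(nu) = -g^{-1}(nu (x) nu) = -(2f + 1).  What
   is left over is a multiple of f, because f is central. *)

From HB Require Import structures.
From mathcomp Require Import all_boot all_algebra.
From mathcomp Require Import reals complex mpoly.
From mathcomp Require Import ring.
Import GRing.Theory Num.Theory.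
Local Open Scope ring_scope.

Set Implicit Arguments.
Unset Strict Implicit.
Unset Printing Implicit Defensive.

Section MonomialLinearExtension.
Variables (n : nat) (R : ringType) (V : lmodType R).
Implicit Types (G : 'X_{1..n} -> V) (p r : {mpoly R[n]}).

Definition mlinext G p : V := \sum_(m <- msupp p) p@_m *: G m.

Lemma mlinext_seqE G p (s : seq 'X_{1..n}) : uniq s -> {subset msupp p <= s} ->
  mlinext G p = \sum_(m <- s) p@_m *: G m.
Proof.
move=> s_uniq supp_s.
rewrite (bigID (mem (msupp p))) /= [X in _ + X]big1 ?addr0; last first.
  by move=> m /memN_msupp_eq0 ->; rewrite scale0r.
rewrite -big_filter; apply: perm_big; apply: uniq_perm.
- exact: msupp_uniq.
- exact: filter_uniq.
by move=> m; rewrite mem_filter andb_idr //; apply: supp_s.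
Qed.

Lemma mlinext_is_linear G : linear (mlinext G).
Proof.
move=> c p r; set s := undup (msupp p ++ msupp r ++ msupp (c *: p + r)).
rewrite !(@mlinext_seqE G _ s) ?undup_uniq //;
  [|by move=> m; rewrite mem_undup !mem_cat => ->; rewrite ?orbT ..].
rewrite scaler_sumr -big_split; apply: eq_bigr => m _.
by rewrite mcoeffD mcoeffZ scalerDl scalerA.
Qed.

HB.instance Definition _ G :=
  GRing.isLinear.Build R {mpoly R[n]} V _ (mlinext G) (mlinext_is_linear G).

Lemma mlinextX G m : mlinext G 'X_[m] = G m.
Proof. by rewrite /mlinext msuppX big_seq1 mcoeffX eqxx scale1r. Qed.

Lemma eq_mlinext G1 G2 : G1 =1 G2 -> mlinext G1 =1 mlinext G2.
Proof. by move=> eqG p; apply: eq_bigr => m _; rewrite eqG. Qed.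

End MonomialLinearExtension.

Lemma mlinext_id n (R : ringType) (p : {mpoly R[n]}) : mlinext (fun m => 'X_[m]) p = p.
Proof. by rewrite [RHS]mpolyE. Qed.

Lemma sum_indicator (R : ringType) (V : lmodType R) (I : finType) (F : I -> V) c :
  \sum_(b : I) (b == c)%:R *: F b = F c.
Proof.
rewrite (big_only1 c) ?eqxx ?scale1r // => b /negbTE-> _.
by rewrite scale0r.
Qed.

Lemma half_double (F : numFieldType) (V : lmodType F) (v : V) : 2^-1 *: (v + v) = v.
Proof. by rewrite -mulr2n -[v *+ 2]scaler_nat scalerA mulVf ?pnatr_eq0 ?scale1r. Qed.

Lemma ord4_ind (P : 'I_4 -> Prop) :
  P (@Ordinal 4 0 isT) -> P (@Ordinal 4 1 isT) -> P (@Ordinal 4 2 isT) ->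
  P (@Ordinal 4 3 isT) -> forall a, P a.
Proof.
by move=> P0 P1 P2 P3 [[|[|[|[|a]]]] lt_a4] //; rewrite (bool_irrelevance lt_a4 isT).
Qed.

Definition mate (a : 'I_4) : 'I_4 := Ordinal (ltn_pmod (a + 2) (isT : (0 < 4)%N)).

Lemma mateK : involutive mate.
Proof. by elim/ord4_ind; apply/val_inj. Qed.

Lemma mate_neq a : (mate a == a) = false.
Proof. by elim/ord4_ind: a. Qed.

Lemma eq_mate a b : (mate a == b) = (a == mate b).
Proof. by apply/eqP/eqP => [<-|->]; rewrite mateK. Qed.

Lemma Pm_mate (R : realType) a b : Pm R a b = (b == mate a)%:R.
Proof. by elim/ord4_ind: a; elim/ord4_ind: b. Qed.

Lemma gl_mate (R : realType) a b : gl R a b = 2^-1 * (b == mate a)%:R.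
Proof. by rewrite /gl Pm_mate. Qed.

Lemma ginv_mate (R : realType) a b : ginv R a b = 2 * (b == mate a)%:R.
Proof. by rewrite /ginv Pm_mate. Qed.

Section R4theta.
Variable R : realType.
Local Notation C := R[i].
Local Notation A := {mpoly C[4]}.
Variable q : C.
Hypothesis q_neq0 : q != 0.

Lemma Rm_diag a : Rm q a a = 1.
Proof. by elim/ord4_ind: a. Qed.

Lemma RmK a b : Rm q a b * Rm q b a = 1.
Proof.
by elim/ord4_ind: a; elim/ord4_ind: b; rewrite /Rm /= ?mulr1 ?mul1r ?mulfV ?mulVf.
Qed.

Lemma Rm_matel a b : Rm q (mate a) b = Rm q b a.
Proof. by elim/ord4_ind: a; elim/ord4_ind: b. Qed.

Lemma Rm_mater a b : Rm q a (mate b) = Rm q b a.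
Proof. by elim/ord4_ind: a; elim/ord4_ind: b. Qed.

Lemma Rm_mate_pair a j k : j \in [:: a; mate a] -> k \in [:: a; mate a] -> Rm q j k = 1.
Proof.
by rewrite !inE => /orP[]/eqP-> /orP[]/eqP->; rewrite ?Rm_matel ?Rm_mater Rm_diag.
Qed.

Lemma Pm_Rm a b : Pm R a b * Rm q a b = Pm R a b.
Proof.
rewrite Pm_mate; have [->|_] := eqVneq b (mate a); last by rewrite mul0r.
by rewrite (Rm_mate_pair (a := a)) ?mulr1 // !inE eqxx ?orbT.
Qed.

Lemma twDl m1 m2 n : tw q (m1 + m2)%MM n = tw q m1 n * tw q m2 n.
Proof.
rewrite /tw -big_split; apply: eq_bigr => a _; rewrite -big_split.
by apply: eq_bigr => b _; rewrite mnmDE mulnDl exprD.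
Qed.

Lemma twDr m n1 n2 : tw q m (n1 + n2)%MM = tw q m n1 * tw q m n2.
Proof.
rewrite /tw -big_split; apply: eq_bigr => a _; rewrite -big_split.
by apply: eq_bigr => b _; rewrite mnmDE mulnDr exprD.
Qed.

Lemma tw0l n : tw q 0%MM n = 1.
Proof. by rewrite /tw big1 // => a _; rewrite big1 // => b _; rewrite mnm0E mul0n. Qed.

Lemma tw0r m : tw q m 0%MM = 1.
Proof. by rewrite /tw big1 // => a _; rewrite big1 // => b _; rewrite mnm0E muln0. Qed.

Lemma twU a b : tw q U_(a) U_(b) = if (b < a)%N then Rm q b a else 1.
Proof.
rewrite /tw (bigD1 a) //= [X in _ * X]big1 ?mulr1; last first.
  move=> a' /negbTE neq_a'a; rewrite big1 // => b' _.
  by rewrite mnm1E eq_sym neq_a'a mul0n.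
rewrite mnm1E eqxx; case: ifP => lt_ba.
  rewrite (bigD1 b) //= mnm1E eqxx expr1 big1 ?mulr1 // => b' /andP[_ /negbTE neq_b'b].
  by rewrite mnm1E eq_sym neq_b'b.
rewrite big1 // => b' lt_b'a; rewrite mnm1E.
by case: eqP => [eq_bb'|]; [move: lt_ba; rewrite eq_bb' lt_b'a | rewrite expr0].
Qed.

Lemma twU_swap a b : tw q U_(a) U_(b) = Rm q b a * tw q U_(b) U_(a).
Proof.
rewrite !twU; case: (ltngtP a b) => [lt_ab|lt_ba|/val_inj->].
- by rewrite RmK.
- by rewrite mulr1.
- by rewrite Rm_diag mulr1.
Qed.

Lemma twU_mater a : tw q U_(a) U_(mate a) = 1.
Proof. by rewrite twU Rm_matel Rm_diag if_same. Qed.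

Lemma twU_matel a : tw q U_(mate a) U_(a) = 1.
Proof. by rewrite twU Rm_mater Rm_diag if_same. Qed.

Lemma sigE i : sig q i =1 mlinext (fun m => (\prod_(j < 4) Rm q j i ^+ m j) *: 'X_[m]).
Proof. by move=> p; apply: eq_bigr => m _; rewrite scalerA. Qed.

Lemma sig_is_linear i : linear (sig q i).
Proof. by move=> c p r; rewrite !sigE linearP. Qed.

HB.instance Definition _ i := GRing.isLinear.Build C A A _ (sig q i) (sig_is_linear i).

Lemma sigX i m : sig q i 'X_[m] = (\prod_(j < 4) Rm q j i ^+ m j) *: 'X_[m].
Proof. by rewrite sigE mlinextX. Qed.

Lemma sig1 i : sig q i 1 = 1.
Proof. by rewrite -mpolyX0 sigX big1 ?scale1r // => j _; rewrite mnm0E. Qed.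

Lemma sigU i a : sig q i 'X_a = Rm q a i *: 'X_a.
Proof.
rewrite sigX (bigD1 a) //= mnm1E eqxx expr1 big1 ?mulr1 // => j /negbTE neq_ja.
by rewrite mnm1E eq_sym neq_ja.
Qed.

Lemma sig_mateK i : cancel (sig q (mate i)) (sig q i).
Proof.
move=> p; rewrite {1}(mpolyE p) (linear_sum (sig q (mate i))) linear_sum [RHS]mpolyE.
apply: eq_bigr => m _.
rewrite !linearZ /= !sigX linearZ /= sigX; congr (_ *: _).
rewrite scalerA -big_split /= big1 ?scale1r // => j _.
by rewrite -exprMn Rm_mater RmK expr1n.
Qed.

Definition tmul_mon (m n : 'X_{1..4}) : A := tw q m n *: 'X_[(m + n)%MM].

Lemma tmul_mlinextl p r :
  tmul q p r = mlinext (fun m => mlinext (tmul_mon m) r) p.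
Proof.
apply: eq_bigr => m _; rewrite scaler_sumr; apply: eq_bigr => n _.
by rewrite !scalerA.
Qed.

Lemma tmul_mlinextr p r :
  tmul q p r = mlinext (fun n => mlinext (tmul_mon^~ n) p) r.
Proof.
rewrite /tmul exchange_big; apply: eq_bigr => n _; rewrite scaler_sumr.
by apply: eq_bigr => m _; rewrite !scalerA [p@_m * _]mulrC.
Qed.

Lemma tmul_is_linear p : linear (tmul q p).
Proof. by move=> c r s; rewrite !tmul_mlinextr linearP. Qed.

HB.instance Definition _ p := GRing.isLinear.Build C A A _ (tmul q p) (tmul_is_linear p).

Lemma tmulZl c p r : tmul q (c *: p) r = c *: tmul q p r.
Proof. by rewrite !tmul_mlinextl linearZ. Qed.

Lemma tmulBl p1 p2 r : tmul q (p1 - p2) r = tmul q p1 r - tmul q p2 r.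
Proof. by rewrite !tmul_mlinextl linearB. Qed.

Lemma tmul_suml (I : Type) (s : seq I) (P : pred I) (F : I -> A) r :
  tmul q (\sum_(k <- s | P k) F k) r = \sum_(k <- s | P k) tmul q (F k) r.
Proof.
rewrite tmul_mlinextl linear_sum; apply: eq_bigr => k _.
by rewrite tmul_mlinextl.
Qed.

Lemma tmulXX m n : tmul q 'X_[m] 'X_[n] = tw q m n *: 'X_[(m + n)%MM].
Proof. by rewrite tmul_mlinextl !mlinextX. Qed.

Lemma tmul1l p : tmul q 1 p = p.
Proof.
rewrite tmul_mlinextl -mpolyX0 mlinextX -[RHS]mlinext_id.
by apply: eq_mlinext => n; rewrite /tmul_mon tw0l scale1r add0m.
Qed.

Lemma tmul1r p : tmul q p 1 = p.
Proof.
rewrite tmul_mlinextr -mpolyX0 mlinextX -[RHS]mlinext_id.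
by apply: eq_mlinext => m; rewrite /tmul_mon tw0r scale1r addm0.
Qed.

Lemma tmulA p r s : tmul q (tmul q p r) s = tmul q p (tmul q r s).
Proof.
rewrite [p]mpolyE (tmul_suml _ _ _ r) (tmul_suml _ _ _ s) (tmul_suml _ _ _ (tmul q r s)).
apply: eq_bigr => m _; rewrite (tmulZl _ _ r) (tmulZl _ _ s) tmulZl; congr (_ *: _).
rewrite [r]mpolyE (linear_sum (tmul q 'X_[m])) (tmul_suml _ _ _ s) (tmul_suml _ _ _ s).
rewrite linear_sum; apply: eq_bigr => n _.
rewrite linearZ (tmulZl _ _ s) (tmulZl _ _ s) linearZ /= tmulXX tmulZl; congr (_ *: _).
rewrite [s]mpolyE (linear_sum (tmul q 'X_[(m + n)%MM])) (linear_sum (tmul q 'X_[n])).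
rewrite (linear_sum (tmul q 'X_[m])) scaler_sumr; apply: eq_bigr => l _.
rewrite !linearZ /= (tmulXX (m + n)%MM l) (tmulXX n l) [in RHS]linearZ /=.
rewrite (tmulXX m (n + l)%MM) !scalerA addmA twDl twDr.
by congr (_ *: _); ring.
Qed.

Definition dA_mon i (m : 'X_{1..4}) : A :=
  ((m i)%:R * \prod_(j < 4 | (i < j)%N) Rm q j i ^+ m j) *: 'X_[(m - U_(i))%MM].

Lemma dAE i p : dA q p i = mlinext (dA_mon i) p.
Proof. by apply: eq_bigr => m _; rewrite scalerA mulrA. Qed.

Lemma dAX i m : dA q 'X_[m] i = dA_mon i m.
Proof. by rewrite dAE mlinextX. Qed.

Lemma dA1 i : dA q 1 i = 0.
Proof. by rewrite -mpolyX0 dAX /dA_mon mnm0E mul0r scale0r. Qed.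

Lemma dAU a i : dA q 'X_a i = (a == i)%:R *: 1.
Proof.
rewrite dAX /dA_mon mnm1E; have [<-|_] := eqVneq a i; last by rewrite !mul0r !scale0r.
rewrite big1 => [|j _]; last by rewrite mnm1E; case: eqP => [->|]; rewrite ?Rm_diag ?expr1n.
have -> : (U_(a) - U_(a))%MM = 0%MM by apply/mnmP => j; rewrite mnmBE subnn mnm0E.
by rewrite mpolyX0 mulr1.
Qed.

Lemma dA_pair a k : dA q 'X_[(U_(a) + U_(mate a))%MM] k =
  ((a == k) + (mate a == k))%:R *: 'X_(mate k).
Proof.
rewrite dAX /dA_mon mnmDE !mnm1E.
have pair_prod b : b \in [:: a; mate a] ->
    \prod_(j < 4 | (b < j)%N) Rm q j b ^+ (U_(a) + U_(mate a))%MM j = 1.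
  move=> b_pair; apply: big1 => j _; rewrite mnmDE !mnm1E.
  have [j_pair|] := boolP (j \in [:: a; mate a]).
    by rewrite (Rm_mate_pair j_pair b_pair) expr1n.
  by rewrite !inE ![j == _]eq_sym => /norP[/negbTE-> /negbTE->].
have [<-|neq_ak] := eqVneq a k.
  by rewrite mate_neq pair_prod ?mem_head // mulr1 addmC addmK.
have [<-|_] := eqVneq (mate a) k; last by rewrite !mul0r !scale0r.
by rewrite pair_prod ?inE ?eqxx ?orbT // mulr1 mateK addmK.
Qed.

Definition quad : A := \sum_(i < 4) \sum_(j < 4) gl R i j *: tmul q (z R i) (z R j).

Lemma fAE : fA q = 2^-1 *: (quad - 1).
Proof. by []. Qed.

Lemma quadE : quad = 2^-1 *: \sum_(a < 4) 'X_[(U_(a) + U_(mate a))%MM].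
Proof.
rewrite /quad scaler_sumr; apply: eq_bigr => a _.
under eq_bigr do rewrite gl_mate mulrC -scalerA.
by rewrite sum_indicator /z tmulXX twU_mater scale1r.
Qed.

Lemma nuE k : nu q k = 2^-1 *: 'X_(mate k).
Proof.
rewrite /nu fAE quadE dAE linearZ linearB linearZ linear_sum /= -dAE dA1 subr0.
under eq_bigr do rewrite -dAE dA_pair natrD scalerDl eq_mate.
by rewrite big_split /= !(sum_indicator (fun=> 'X_(mate k))) half_double.
Qed.

Lemma nu_sum l : nu q l = \sum_(k < 4) gl R k l *: z R k.
Proof.
under eq_bigr do rewrite gl_mate eq_sym eq_mate mulrC -scalerA.
by rewrite sum_indicator nuE.
Qed.

Lemma sum_ginv_nu i : \sum_(k < 4) ginv R i k *: nu q k = z R i.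
Proof.
under eq_bigr do rewrite ginv_mate mulrC -scalerA.
by rewrite sum_indicator nuE mateK scalerA mulfV ?pnatr_eq0 ?scale1r.
Qed.

Lemma sig_nu i k : sig q i (nu q k) = Rm q i k *: nu q k.
Proof. by rewrite nuE linearZ /= sigU Rm_matel !scalerA mulrC. Qed.

Lemma nabla_nu i j : nabla q (nu q) i j = gl R i j *: 1.
Proof. by rewrite /nabla nuE dAE linearZ /= -dAE dAU gl_mate eq_mate scalerA. Qed.

Lemma gl_sig_sig i j p : gl R i j *: sig q i (sig q j p) = gl R i j *: p.
Proof.
rewrite gl_mate; have [->|_] := eqVneq j (mate i); last by rewrite mulr0 !scale0r.
by rewrite sig_mateK.
Qed.

Lemma gl_Rm i j k : gl R i j * (Rm q j k * Rm q i k) = gl R i j.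
Proof.
rewrite gl_mate; have [->|_] := eqVneq j (mate i); last by rewrite !mulr0 mul0r.
by rewrite Rm_matel RmK mulr1.
Qed.

Lemma ginv_Rm i k : ginv R i k * Rm q i k = ginv R i k.
Proof. by rewrite /ginv -mulrA Pm_Rm. Qed.

Lemma tmul_nu_nu j k : tmul q (nu q j) (nu q k) = Rm q k j *: tmul q (nu q k) (nu q j).
Proof.
rewrite !nuE !linearZ /= !tmulZl !tmulXX twU_swap !Rm_matel addmC !scalerA.
by congr (_ *: _); ring.
Qed.

(* In coordinates, this is sigma(nu (x) nu) = nu (x) nu. *)
Lemma tens11_nu_nu_braided j k :
  tens11 q (nu q) (nu q) k j = Rm q k j *: tens11 q (nu q) (nu q) j k.
Proof.
rewrite /tens11 !sig_nu !linearZ /= [tmul q (nu q j) _]tmul_nu_nu !scalerA.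
by rewrite RmK mul1r.
Qed.

Lemma ginvT_nu_nu : ginvT (tens11 q (nu q) (nu q)) = quad.
Proof.
rewrite /ginvT quadE scaler_sumr; apply: eq_bigr => j _.
under eq_bigr do rewrite /tens11 sig_nu linearZ /= scalerA ginv_Rm ginv_mate mulrC -scalerA.
rewrite sum_indicator !nuE mateK !linearZ /= tmulZl tmulXX twU_matel addmC scale1r.
by congr (_ *: _); rewrite scalerA mulfV ?pnatr_eq0 ?scale1r.
Qed.

Lemma quad_central i : tmul q (z R i) quad = tmul q quad (z R i).
Proof.
rewrite quadE linearZ tmulZl tmul_suml linear_sum /=; congr (_ *: _).
apply: eq_bigr => a _; rewrite /z !tmulXX [(U_(i) + _)%MM]addmC twDr twDl.
by rewrite (twU_swap i a) (twU_swap i (mate a)) Rm_matel mulrACA RmK mul1r.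
Qed.

Lemma fA_central i : tmul q (z R i) (fA q) = tmul q (fA q) (z R i).
Proof. by rewrite fAE linearZ linearB tmulZl tmulBl /= tmul1l tmul1r quad_central. Qed.

Lemma dzE i j : dz R i j = (j == i)%:R *: 1.
Proof. by rewrite /dz; case: eqP; rewrite ?scale1r ?scale0r. Qed.

Lemma ginvT_dz_nu i : ginvT (tens11 q (dz R i) (nu q)) = z R i.
Proof.
rewrite /ginvT; under eq_bigr do under eq_bigr do
  rewrite /tens11 dzE tmulZl tmul1l sig_nu !scalerA mulrAC ginv_Rm mulrC -scalerA.
under eq_bigr do rewrite -scaler_sumr.
by rewrite sum_indicator sum_ginv_nu.
Qed.

Lemma Pi_dz i j : Pi q (dz R i) j = (j == i)%:R *: 1 - tmul q (z R i) (nu q j).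
Proof. by rewrite /Pi ginvT_dz_nu dzE. Qed.

Lemma nablaSp_e al i b : nablaSp q (e R al) i b = 0.
Proof.
rewrite /nablaSp /e; case: eqP => _; first exact: dA1.
by rewrite dAE linear0.
Qed.

Lemma eqOm3B_of_eq (U U' : Om3 R) : (forall i j k, U i j k = U' i j k) -> eqOm3B q U U'.
Proof.
move=> eqU; exists (fun _ _ _ => 0), (fun _ _ => 0) => i j k.
by rewrite eqU subrr /tens12 !linear0 addr0.
Qed.

Lemma eqOmEB_of_eq (X X' : OmSp R) : (forall i al, X i al = X' i al) -> eqOmEB q X X'.
Proof.
move=> eqX; exists (fun _ _ => 0), (fun _ => 0) => i al.
by rewrite eqX subrr /tensE !linear0 addr0.
Qed.

Lemma braiding_nabla_nu w :
  eqOm3B q (sigma23 q (sigma12 q (tens12 q (Pi q w) (nabla q (nu q)))))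
           (tens21 q (nabla q (nu q)) (Pi q w)).
Proof.
apply: eqOm3B_of_eq => i j k.
rewrite /sigma23 /sigma12 /tens12 /tens21 !nabla_nu !linearZ /= sig1 tmul1r.
rewrite tmulZl tmul1l gl_sig_sig !scalerA; congr (_ *: _).
by rewrite -[RHS](gl_Rm i j k); ring.
Qed.

Lemma tensE_e v al k a : tensE q v (e R al) k a = (a == al)%:R *: v k.
Proof.
rewrite /tensE /e; case: eqP => _; first by rewrite sig1 tmul1r scale1r.
by rewrite linear0 linear0 scale0r.
Qed.

Lemma sum_braided (V : lmodType C) (N : 'I_4 -> 'I_4 -> C) (T : 'I_4 -> 'I_4 -> V) :
  (forall j k, T k j = Rm q k j *: T j k) ->
  \sum_(j < 4) \sum_(k < 4) N j k *: T j k =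
  2^-1 *: \sum_(j < 4) \sum_(k < 4) (N j k + Rm q k j * N k j) *: T j k.
Proof.
move=> braided; set S := \sum_(j < 4) \sum_(k < 4) N j k *: T j k.
have swap : \sum_(j < 4) \sum_(k < 4) (Rm q k j * N k j) *: T j k = S.
  rewrite exchange_big /S; apply: eq_bigr => k _; apply: eq_bigr => j _.
  by rewrite (braided j k) scalerA mulrC.
have -> : \sum_(j < 4) \sum_(k < 4) (N j k + Rm q k j * N k j) *: T j k = S + S.
  rewrite -{2}swap -big_split; apply: eq_bigr => j _; rewrite -big_split.
  by apply: eq_bigr => k _; rewrite scalerDl.
by rewrite half_double.
Qed.

Section SpinStructure.
Variable gam : 'I_4 -> 'M[C]_4.
Hypothesis clifford : forall i j : 'I_4,
  gam i *m gam j + Rm q j i *: (gam j *m gam i) = - (2 * ginv R i j)%:M.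

Lemma clifford_entry b al j k :
  (gam j *m gam k) b al + Rm q k j * (gam k *m gam j) b al =
  - (2 * ginv R j k) * (b == al)%:R.
Proof.
have := congr1 (fun M : 'M[C]_4 => M b al) (clifford j k).
by rewrite !mxE /= => ->; rewrite mulNr mulr_natr.
Qed.

Lemma gamma2_indicator (Y : Om2Sp R) (Z : Om2 R) al b :
  (forall j k a, Y j k a = (a == al)%:R *: Z j k) ->
  gamma2 gam Y b = \sum_(j < 4) \sum_(k < 4) (gam j *m gam k) b al *: Z j k.
Proof.
move=> eqY; apply: eq_bigr => j _; rewrite /gamma.
have inner a k : \sum_(c < 4) gam k a c *: Y j k c = gam k a al *: Z j k.
  under eq_bigr do rewrite eqY scalerA mulrC -scalerA.
  exact: sum_indicator.
under eq_bigr do under eq_bigr do rewrite inner.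
under eq_bigr do rewrite scaler_sumr.
rewrite exchange_big; apply: eq_bigr => k _; rewrite mxE scaler_suml.
by apply: eq_bigr => a _; rewrite scalerA.
Qed.

Lemma clifford_nu_nu b al :
  \sum_(j < 4) \sum_(k < 4) (gam j *m gam k) b al *: tens11 q (nu q) (nu q) j k =
  - ((b == al)%:R *: quad).
Proof.
rewrite (sum_braided _ tens11_nu_nu_braided) -ginvT_nu_nu /ginvT -scaleNr !scaler_sumr.
apply: eq_bigr => j _; rewrite !scaler_sumr; apply: eq_bigr => k _.
rewrite clifford_entry !scalerA; congr (_ *: _).
by field.
Qed.

Lemma sum_clifford_sig_nu i b al :
  \sum_(k < 4) (gam i *m gam k) b al *: sig q i (nu q k) =
  - \sum_(k < 4) (gam k *m gam i) b al *: nu q k - (2 * (b == al)%:R) *: z R i.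
Proof.
have twisted k : (gam i *m gam k) b al * Rm q i k =
    - (gam k *m gam i) b al - 2 * (b == al)%:R * ginv R i k.
  transitivity (((gam i *m gam k) b al + Rm q k i * (gam k *m gam i) b al) * Rm q i k
      - (gam k *m gam i) b al * (Rm q k i * Rm q i k)); first by ring.
  by rewrite clifford_entry RmK -[in RHS](ginv_Rm i k); ring.
under eq_bigr do rewrite sig_nu scalerA twisted scalerBl scaleNr -scalerA.
by rewrite sumrB sumrN -scaler_sumr sum_ginv_nu.
Qed.

Lemma gammaB_dz_e i al b :
  gammaB q gam (dz R i) (e R al) b =
  \sum_(k < 4) (gam i *m gam k) b al *: sig q i (nu q k)
  - tmul q (z R i)
      (\sum_(j < 4) \sum_(k < 4) (gam j *m gam k) b al *: tens11 q (nu q) (nu q) j k).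
Proof.
rewrite /gammaB (@gamma2_indicator _ (fun j k => tmul q (Pi q (dz R i) j) (sig q j (nu q k))) al);
  last by move=> j k a; rewrite /tens1E tensE_e !linearZ.
have split_Pi j k : tmul q (Pi q (dz R i) j) (sig q j (nu q k)) =
    (j == i)%:R *: sig q j (nu q k) - tmul q (z R i) (tens11 q (nu q) (nu q) j k).
  by rewrite Pi_dz tmulBl tmulZl tmul1l tmulA.
under eq_bigr do under eq_bigr do rewrite split_Pi scalerBr scalerA mulrC -scalerA.
under eq_bigr do rewrite sumrB -scaler_sumr.
rewrite sumrB sum_indicator (linear_sum (tmul q (z R i))); congr (_ - _).
apply: eq_bigr => j _; rewrite linear_sum; apply: eq_bigr => k _.
by rewrite linearZ.
Qed.

Lemma gammaB_dz_e_class i al :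
  eqEB q (gammaB q gam (dz R i) (e R al))
    (fun b => - (\sum_(k < 4) \sum_(l < 4) (gl R k l * (gam l *m gam i) b al) *: z R k
                 + (b == al)%:R *: z R i)).
Proof.
(* The remainder is delta_b (z^i g(z,z) - z^i) = 2 delta_b z^i f = f (2 delta_b z^i). *)
exists (fun b => (2 * (b == al)%:R) *: z R i) => b.
rewrite gammaB_dz_e sum_clifford_sig_nu clifford_nu_nu.
have -> : \sum_(k < 4) \sum_(l < 4) (gl R k l * (gam l *m gam i) b al) *: z R k =
    \sum_(l < 4) (gam l *m gam i) b al *: nu q l.
  rewrite exchange_big; apply: eq_bigr => l _; rewrite nu_sum scaler_sumr.
  by apply: eq_bigr => k _; rewrite scalerA mulrC.
rewrite [RHS]linearZ /= -fA_central fAE [tmul _ _ (2^-1 *: _)]linearZ /=.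
rewrite [tmul _ _ (quad - 1)]linearB /= tmul1r [RHS]scalerA mulrAC mulfV ?pnatr_eq0 // mul1r.
rewrite [tmul _ _ (- _)]linearN /= [tmul _ _ (_ *: quad)]linearZ /= scalerBr mulr_natl -scalerMnl.
by ring.
Qed.

Lemma nablaB_e_class al :
  eqOmEB q (nablaB q gam (e R al))
    (fun i b => 2^-1 *: \sum_(j < 4) \sum_(k < 4) \sum_(l < 4)
                  (gl R i j * gl R k l * (gam j *m gam l) b al) *: z R k).
Proof.
apply: eqOmEB_of_eq => i b.
rewrite /nablaB nablaSp_e add0r; congr (2^-1 *: _).
rewrite /idgamma2 (@gamma2_indicator _ (fun j k => gl R i j *: nu q k) al); last first.
  move=> j k a; rewrite /tens2E tensE_e nabla_nu tmulZl tmul1l gl_sig_sig.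
  by rewrite !scalerA mulrC.
apply: eq_bigr => j _; rewrite exchange_big; apply: eq_bigr => l _ /=.
rewrite nu_sum !scaler_sumr; apply: eq_bigr => k _.
by rewrite !scalerA; congr (_ *: _); ring.
Qed.

End SpinStructure.

End R4theta.

Theorem proposition4p9 (R : realType) (q : R[i]) (hq : q * (q^*)%C = 1)
  (gam : 'I_4 -> 'M[R[i]]_4)
  (hcliff : forall i j : 'I_4,
     gam i *m gam j + Rm q j i *: (gam j *m gam i) = - (2 * ginv R i j)%:M) :
  (forall w : Om1 R,
     eqOm3B q (sigma23 q (sigma12 q (tens12 q (Pi q w) (nabla q (nu q)))))
              (tens21 q (nabla q (nu q)) (Pi q w)))
  /\
  (forall i al : 'I_4,
     eqEB q (gammaB q gam (dz R i) (e R al))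
       (fun b => - (\sum_(k < 4) \sum_(l < 4)
                      (gl R k l * (gam l *m gam i) b al) *: z R k
                    + (b == al)%:R *: z R i)))
  /\
  (forall al : 'I_4,
     eqOmEB q (nablaB q gam (e R al))
       (fun i b => 2^-1 *: \sum_(j < 4) \sum_(k < 4) \sum_(l < 4)
                     (gl R i j * gl R k l * (gam j *m gam l) b al) *: z R k)).
Proof.
have q_neq0 : q != 0.
  by apply/eqP => q0; move: hq; rewrite q0 mul0r => /esym/eqP; rewrite oner_eq0.
split; first exact: braiding_nabla_nu.
split; first exact: gammaB_dz_e_class.
exact: nablaB_e_class.
Qed.
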